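(* Let $0<\alpha<1$ and $\sigma=1-\alpha/2$. Then for every integer $s\ge1$, $$b_s^{(\alpha,\sigma)}:=\frac{1}{2-\alpha}\big[(s+\sigma)^{2-\alpha}-(s-1+\sigma)^{2-\alpha}\big]-\frac12\big[(s+\sigma)^{1-\alpha}+(s-1+\sigma)^{1-\alpha}\big]>0.$$ *)

From Stdlib Require Import Reals.
Open Scope R_scope.

(* b_s^{(alpha,sigma)} from the paper; all bases s+sigma, s-1+sigma are > 0
   in the theorem's range, so Rpower (= exp (y * ln x)) is the usual power. *)
Definition b_coef (alpha sigma : R) (s : nat) : R :=
  / (2 - alpha) * (Rpower (INR s + sigma) (2 - alpha)
                   - Rpower (INR s - 1 + sigma) (2 - alpha))
  - / 2 * (Rpower (INR s + sigma) (1 - alpha)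
           + Rpower (INR s - 1 + sigma) (1 - alpha)).

(* With a = s - 1 + sigma > 0 (the only property of sigma that matters) and
   b = 1 - alpha in (0,1), the coefficient is the integral of x^b over [a, a+1]
   minus its trapezoid approximation, positive since x^b is strictly concave.
   Concavity enters through the mean value theorem twice: the tangent at a + t
   lies above the graph at a, and that gap is twice the derivative in t of the
   trapezoid error on [a, a+t]. *)

From Stdlib Require Import Reals Lra.
From Coquelicot Require Import Coquelicot.
Open Scope R_scope.

Lemma Rpower_1_plus (x b : R) : 0 < x -> Rpower x (1 + b) = x * Rpower x b.
Proof. intros Hx; now rewrite Rpower_plus, Rpower_1. Qed.

Lemma Rpower_lt_tangent_right (a b t : R) : 0 < a -> 0 < b < 1 -> 0 < t ->
  Rpower a b < Rpower (a + t) b - t * (b * Rpower (a + t) b / (a + t)).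
Proof.
  intros Ha Hb Ht.
  set (gap := fun u => Rpower (a + u) b - Rpower a b
                       - u * (b * Rpower (a + u) b / (a + u))).
  set (gap' := fun u => u * b * (1 - b) * Rpower (a + u) b / ((a + u) * (a + u))).
  destruct (MVT_cor2 gap gap' 0 t Ht) as [c [Hmvt Hc]].
  { intros c Hc; apply is_derive_Reals; unfold gap, gap', Rpower.
    auto_derive; [repeat split; lra | field; lra]. }
  assert (Hgap'c : 0 < gap' c).
  { unfold gap', Rdiv.
    assert (Hpow : 0 < Rpower (a + c) b) by apply exp_pos.
    apply Rmult_lt_0_compat;
      [repeat apply Rmult_lt_0_compat; lra
      | apply Rinv_0_lt_compat, Rmult_lt_0_compat; lra]. }
  assert (Hgap0 : gap 0 = 0) by (unfold gap; rewrite Rplus_0_r; ring).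
  assert (Hgapt : 0 < gap t) by (rewrite Hgap0 in Hmvt; nra).
  unfold gap in Hgapt; lra.
Qed.

Lemma Rpower_trapezoid_lt (a b h : R) : 0 < a -> 0 < b < 1 -> 0 < h ->
  h / 2 * (Rpower (a + h) b + Rpower a b)
  < (Rpower (a + h) (1 + b) - Rpower a (1 + b)) / (1 + b).
Proof.
  intros Ha Hb Hh.
  set (err := fun u => Rpower (a + u) (1 + b) / (1 + b)
                       - u / 2 * (Rpower (a + u) b + Rpower a b)).
  set (err' := fun u => / 2 * (Rpower (a + u) b - Rpower a b
                               - u * (b * Rpower (a + u) b / (a + u)))).
  destruct (MVT_cor2 err err' 0 h Hh) as [c [Hmvt Hc]].
  { intros c Hc; apply is_derive_Reals.
    pose proof (Rpower_1_plus (a + c) b ltac:(lra)) as Hpow; unfold Rpower in Hpow.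
    unfold err, err', Rpower.
    auto_derive; [repeat split; lra | rewrite Hpow; field; lra]. }
  pose proof (Rpower_lt_tangent_right a b c Ha Hb ltac:(lra)) as Htangent.
  assert (Herr0 : err 0 = Rpower a (1 + b) / (1 + b))
    by (unfold err; rewrite Rplus_0_r; field; lra).
  assert (Herrh : err 0 < err h) by (unfold err' in Hmvt; nra).
  rewrite Herr0 in Herrh; unfold err in Herrh.
  assert (Hdiv : (Rpower (a + h) (1 + b) - Rpower a (1 + b)) / (1 + b)
                 = Rpower (a + h) (1 + b) / (1 + b) - Rpower a (1 + b) / (1 + b))
    by (field; lra).
  rewrite Hdiv; lra.
Qed.

Theorem corollary2 (alpha : R) (s : nat) :
  0 < alpha -> alpha < 1 -> (1 <= s)%nat ->
  b_coef alpha (1 - alpha / 2) s > 0.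
Proof.
  intros Halpha0 Halpha1 Hs.
  assert (Hs1 : 1 <= INR s) by exact (le_INR 1 s Hs).
  set (a := INR s - 1 + (1 - alpha / 2)).
  pose proof (Rpower_trapezoid_lt a (1 - alpha) 1 ltac:(unfold a; lra)
                ltac:(lra) Rlt_0_1) as Htrapezoid.
  unfold b_coef; fold a.
  replace (INR s + (1 - alpha / 2)) with (a + 1) by (unfold a; ring).
  replace (2 - alpha) with (1 + (1 - alpha)) by ring.
  unfold Rdiv in Htrapezoid; lra.
Qed.
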